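(* Fix parameters (including $K\in\mathbb N$ and $\beta_{IA}\in(0,1]$) and a population size vector $\mathbf m$ as in the context, with Assumption (A). Then the problem $\min_{\mathbf y\in\mathcal Y}\overline{SC}(\mathbf y)$ has a unique solution $\mathbf y^\star(\mathbf m,K,\beta_{IA})$.
   Context: Let $D_{\max}\in\mathbb N$, $\mathcal D=\{1,\dots,D_{\max}\}$. A population size vector is $\mathbf m=(m_d)_{d\in\mathcal D}$ with $m_d>0$, $\sum_d m_d=1$. Parameters: $\tau_{DA}\in(0,1]$; $0\le L_P<L_U$; $0\le p_P^i<p_U^i\le1$; $\beta_{IA}\in(0,1]$; $K\in\mathbb N$; $c_P,c_I\ge0$; $\xi_{\rm cov}\in(0,1]$, $ded\ge0$. Let $\mathcal Y=\prod_{d\in\mathcal D}[0,m_d]$. For $\mathbf y\in\mathcal Y$ set $g_d=y_d/m_d$, $w_d=d\,m_d/\sum_{d'}d'm_{d'}$, $\gamma(\mathbf y)=\beta_{IA}\sum_d w_d(g_dp_P^i+(1-g_d)p_U^i)$, $\lambda(\mathbf y)=\beta_{IA}\sum_d w_d(d-1)(g_dp_P^i+(1-g_d)p_U^i)$, $e(\mathbf y)=\gamma(\mathbf y)\sum_{k=1}^K\lambda(\mathbf y)^{k-1}$, $C_{d,P}(\mathbf y)=\tau_{DA}(1+d\,e(\mathbf y))L_P+c_P$, $C_{d,N}(\mathbf y)=\tau_{DA}(1+d\,e(\mathbf y))L_U$, and the social cost $\overline{SC}(\mathbf y)=\sum_{d\in\mathcal D}\big(y_dC_{d,P}(\mathbf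 y)+(m_d-y_d)C_{d,N}(\mathbf y)\big)$ (here $y_d$ is the mass of degree-$d$ nodes that protect, the rest take no action). Assumption (A): $L_P<(1-\xi_{\rm cov})L_U$ and $c_P>c_I+ded$. *)

From HB Require Import structures.
From mathcomp Require Import all_boot all_order all_algebra.
From mathcomp Require Import reals.
Set Implicit Arguments. Unset Strict Implicit. Unset Printing Implicit Defensive.
Import Order.TTheory GRing.Theory Num.Theory.
Local Open Scope ring_scope.

Section SocialCost.
Variable R : realType.
Variable Dmax : nat.
(* degree index i : 'I_Dmax represents the degree d = i+1 in {1,...,Dmax} *)
Definition deg (i : 'I_Dmax) : R := (i.+1)%:R.

(* population size vector m; strategy vector y (mass of protecting nodes) *)
Variables (m : 'I_Dmax -> R).

Definition is_pop_size : Prop :=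
  (forall i, 0 < m i) /\ \sum_(i < Dmax) m i = 1.

Definition inY (y : 'I_Dmax -> R) : Prop :=
  forall i, 0 <= y i <= m i.

Definition gfrac (y : 'I_Dmax -> R) (i : 'I_Dmax) : R := y i / m i.

Definition wdeg (i : 'I_Dmax) : R :=
  deg i * m i / \sum_(j < Dmax) deg j * m j.

Variables (tauDA LP LU pP pU betaIA cP cI xicov ded : R) (K : nat).

Definition infp (y : 'I_Dmax -> R) (i : 'I_Dmax) : R :=
  gfrac y i * pP + (1 - gfrac y i) * pU.

Definition gammaf (y : 'I_Dmax -> R) : R :=
  betaIA * \sum_(i < Dmax) wdeg i * infp y i.

Definition lambdaf (y : 'I_Dmax -> R) : R :=
  betaIA * \sum_(i < Dmax) wdeg i * (deg i - 1) * infp y i.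

Definition ef (y : 'I_Dmax -> R) : R :=
  gammaf y * \sum_(k < K) lambdaf y ^+ k.

Definition CP (y : 'I_Dmax -> R) (i : 'I_Dmax) : R :=
  tauDA * (1 + deg i * ef y) * LP + cP.

Definition CN (y : 'I_Dmax -> R) (i : 'I_Dmax) : R :=
  tauDA * (1 + deg i * ef y) * LU.

Definition SC (y : 'I_Dmax -> R) : R :=
  \sum_(i < Dmax) (y i * CP y i + (m i - y i) * CN y i).

End SocialCost.

From HB Require Import structures.
From mathcomp Require Import all_boot all_order all_algebra.
From mathcomp Require Import reals ring lra.
From mathcomp Require Import all_classical all_analysis.
Import Order.TTheory GRing.Theory Num.Theory numFieldTopology.Exports numFieldNormedType.Exports.
Set Implicit Arguments. Unset Strict Implicit. Unset Printing Implicit Defensive.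
Local Open Scope ring_scope.

(* Every term of the social cost is an affine functional [wsum] of y of the
   form sum_i c_i (y_i p + (m_i - y_i) q), so SC = base + tau * gamma * loss *
   (1 + lambda + ... + lambda^(K-1)) with gamma, loss, lambda nonnegative on
   the box and nonincreasing in y.  Existence is compactness.  For uniqueness,
   moving protection mass from a lower to a higher degree leaves base fixed,
   strictly lowers gamma and loss and does not raise lambda, so every minimizer
   has threshold form; two threshold vectors are comparable, and along two
   comparable distinct points SC is strictly midpoint convex (the product of
   two strictly decreasing nonnegative affine maps is strictly convex there,
   and the geometric sum is convex and nonincreasing), which contradicts
   minimality of both. *)

Section WeightedSum.
Variables (R : realFieldType) (n : nat) (m : 'I_n -> R).

Definition wsum (c : 'I_n -> R) (p q : R) (y : 'I_n -> R) : R :=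
  \sum_(i < n) c i * (y i * p + (m i - y i) * q).

Definition midpoint (y1 y2 : 'I_n -> R) : 'I_n -> R := fun i => (y1 i + y2 i) / 2.

Definition transfer (y : 'I_n -> R) (i j : 'I_n) (e : R) : 'I_n -> R :=
  fun k => y k + e * ((k == j)%:R - (k == i)%:R).

Variables (c : 'I_n -> R) (p q : R).

Lemma wsum_midpoint y1 y2 :
  wsum c p q (midpoint y1 y2) = (wsum c p q y1 + wsum c p q y2) / 2.
Proof.
rewrite /wsum /midpoint -big_split /= mulr_suml.
by apply: eq_bigr => i _; field.
Qed.

Lemma wsumB y1 y2 :
  wsum c p q y1 - wsum c p q y2 = (p - q) * \sum_(i < n) c i * (y1 i - y2 i).
Proof. rewrite /wsum -sumrB mulr_sumr; apply: eq_bigr => i _; ring. Qed.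

Lemma wsum_ge0 y : (forall i, 0 <= c i) -> 0 <= p -> 0 <= q ->
  (forall i, 0 <= y i <= m i) -> 0 <= wsum c p q y.
Proof.
move=> c0 p0 q0 hy; apply: sumr_ge0 => i _; have /andP[y0 ym] := hy i.
by rewrite mulr_ge0 ?addr_ge0 ?mulr_ge0 ?subr_ge0.
Qed.

Lemma le_wsum y1 y2 : (forall i, 0 <= c i) -> p <= q ->
  (forall i, y1 i <= y2 i) -> wsum c p q y2 <= wsum c p q y1.
Proof.
move=> c0 pq hy; rewrite -subr_ge0 wsumB; apply: mulr_le0; first by rewrite subr_le0.
by apply: sumr_le0 => i _; rewrite mulr_ge0_le0 ?subr_le0.
Qed.

Lemma lt_wsum y1 y2 k : (forall i, 0 < c i) -> p < q ->
  (forall i, y1 i <= y2 i) -> y1 k < y2 k -> wsum c p q y2 < wsum c p q y1.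
Proof.
move=> c0 pq hy hk; rewrite -subr_gt0 wsumB nmulr_rgt0 ?subr_lt0 // (bigD1 k) //=.
apply: ltr_wnDr; last by rewrite pmulr_rlt0 ?subr_lt0.
by apply: sumr_le0 => i _; rewrite mulr_ge0_le0 ?subr_le0 ?(ltW (c0 i)).
Qed.

Lemma wsum_transfer y i j e :
  wsum c p q (transfer y i j e) - wsum c p q y = e * (c j - c i) * (p - q).
Proof.
have sum_delta l : \sum_(k < n) c k * (k == l)%:R = c l.
  rewrite (bigD1 l) //= eqxx mulr1 big1 ?addr0 // => k /negbTE ->.
  by rewrite mulr0.
rewrite wsumB.
have -> : \sum_(k < n) c k * (transfer y i j e k - y k) = e * (c j - c i).
  rewrite -!sum_delta -sumrB mulr_sumr.
  by apply: eq_bigr => k _; rewrite /transfer; ring.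
by rewrite mulrC.
Qed.

End WeightedSum.

Section GeometricSum.
Variable R : realFieldType.

Definition geom (K : nat) (x : R) : R := \sum_(k < K) x ^+ k.

Lemma expr_midpoint_le (x y : R) k : 0 <= x -> 0 <= y ->
  ((x + y) / 2) ^+ k <= (x ^+ k + y ^+ k) / 2.
Proof.
move=> x0 y0; elim: k => [|k IHk]; first by rewrite !expr0; lra.
have mono : 0 <= (x ^+ k - y ^+ k) * (x - y).
  have [xy | yx] := lerP x y.
    by rewrite mulr_le0 ?subr_le0 ?lerXn2r.
  by rewrite mulr_ge0 ?subr_ge0 ?lerXn2r ?(ltW yx).
have mid0 : 0 <= (x + y) / 2 by lra.
rewrite !exprS; apply: le_trans (ler_wpM2l mid0 IHk) _; nra.
Qed.

Variable K : nat.

Lemma geom_ge1 x : (0 < K)%N -> 0 <= x -> 1 <= geom K x.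
Proof.
move=> K0 x0; rewrite /geom -(prednK K0) big_ord_recl expr0 lerDl.
by apply: sumr_ge0 => k _; rewrite exprn_ge0.
Qed.

Lemma ler_geom x y : 0 <= x -> x <= y -> geom K x <= geom K y.
Proof.
move=> x0 xy; apply: ler_sum => k _.
by rewrite lerXn2r // nnegrE (le_trans x0).
Qed.

Lemma geom_midpoint_le x y : 0 <= x -> 0 <= y ->
  geom K ((x + y) / 2) <= (geom K x + geom K y) / 2.
Proof.
move=> x0 y0; rewrite /geom -big_split mulr_suml; apply: ler_sum => k _.
exact: expr_midpoint_le.
Qed.

Lemma midpoint_mul_lt (a1 a2 a b1 b2 b : R) : 0 <= a2 <= a1 -> a < (a1 + a2) / 2 ->
  b2 <= b1 -> 0 < b <= (b1 + b2) / 2 -> a * b < (a1 * b1 + a2 * b2) / 2.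
Proof.
move=> /andP[a20 a21] a_lt b21 /andP[b0 b_le].
have chebyshev : 0 <= (a1 - a2) * (b1 - b2) by rewrite mulr_ge0 ?subr_ge0.
have : a * b < (a1 + a2) / 2 * b by rewrite ltr_pM2r.
have : (a1 + a2) / 2 * b <= (a1 + a2) / 2 * ((b1 + b2) / 2) by rewrite ler_wpM2l //; lra.
nra.
Qed.

End GeometricSum.

Section Threshold.
Variables (R : realType) (n : nat) (m : 'I_n -> R).

Definition threshold (y : 'I_n -> R) : Prop :=
  forall i j : 'I_n, (i < j)%N -> 0 < y i -> y j = m j.

Lemma threshold_comparable y1 y2 : inY m y1 -> inY m y2 ->
  threshold y1 -> threshold y2 ->
  (forall k, y1 k <= y2 k) \/ (forall k, y2 k <= y1 k).
Proof.
move=> h1 h2 t1 t2; have [/forallP le12 | /forallPn[i]] := boolP [forall k, y1 k <= y2 k].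
  by left.
rewrite -ltNge => lt21; right => k; rewrite leNgt; apply/negP => lt12.
have /andP[y1i0 y1im] := h1 i; have /andP[y2i0 _] := h2 i.
have /andP[y1k0 _] := h1 k; have /andP[_ y2km] := h2 k.
have [ik | ki | /val_inj ik] := ltngtP i k.
- by move: lt12; rewrite (t1 i k ik (le_lt_trans y2i0 lt21)) ltNge y2km.
- by move: lt21; rewrite (t2 k i ki (le_lt_trans y1k0 lt12)) ltNge y1im.
- by move: lt12; rewrite -ik ltNge (ltW lt21).
Qed.

End Threshold.

Section BoxMinimum.
Local Open Scope classical_set_scope.
Variables (R : realType) (n : nat) (m : 'I_n -> R).

Lemma continuous_wsum c p q :
  continuous (fun v : 'rV[R]_n => wsum m c p q (fun i => v ord0 i)).
Proof.
apply: (@continuous_big _ _ +%R 0 xpredT add_continuous) => i _ v.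
have coord : (fun w : 'rV[R]_n => w ord0 i) @ v --> v ord0 i := @coord_continuous R 1 n ord0 i v.
exact: cvgM (cvg_cst _) (cvgD (cvgM coord (cvg_cst _))
  (cvgM (cvgD (cvg_cst _) (cvgN coord)) (cvg_cst _))).
Qed.

Lemma continuous_geom K : continuous (@geom R K).
Proof.
apply: (@continuous_big _ _ +%R 0 xpredT add_continuous) => k _.
exact: exprn_continuous.
Qed.

Lemma box_min_exists (f : 'rV[R]_n -> R) : (forall i, 0 <= m i) -> continuous f ->
  exists y, inY m y /\ forall y', inY m y' -> f (\row_i y i) <= f (\row_i y' i).
Proof.
move=> m0 f_cont; set box := [set v : 'rV[R]_n | forall i, `[0, m i] (v ord0 i)].
have box_compact : compact box.
  by apply: (@rV_compact _ n (fun i => `[0, m i])) => i; exact: segment_compact.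
have box0 : box !=set0 by exists 0 => i /=; rewrite mxE in_itv /= lexx m0.
have [c /set_mem c_box c_min] := EVT_min_rV box0 box_compact (continuous_subspaceT f_cont).
exists (fun i => c ord0 i); split; first by move=> i; have := c_box i; rewrite /= in_itv.
have -> : \row_i c ord0 i = c by apply/rowP => i; rewrite !mxE.
move=> y' hy'; apply: c_min; rewrite inE => i /=; rewrite mxE in_itv; exact: hy'.
Qed.

End BoxMinimum.

Section SocialCostMinimizer.
Variables (R : realType) (n : nat) (m : 'I_n -> R).
Variables (tau LP LU pP pU beta cP : R) (K : nat).
Hypotheses (m_pop : is_pop_size m) (tau_gt0 : 0 < tau) (beta_gt0 : 0 < beta).
Hypotheses (LP_ge0 : 0 <= LP) (LP_lt_LU : LP < LU) (pP_ge0 : 0 <= pP) (pP_lt_pU : pP < pU).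
Hypothesis K_gt0 : (0 < K)%N.

Local Notation cost := (SC m tau LP LU pP pU beta cP K).

Lemma deg_ge1 (i : 'I_n) : 1 <= deg R i.
Proof. by rewrite ler1n. Qed.

Lemma deg_gt0 (i : 'I_n) : 0 < deg R i.
Proof. by rewrite ltr0Sn. Qed.

Lemma ltr_deg (i j : 'I_n) : (i < j)%N -> deg R i < deg R j.
Proof. by rewrite ltr_nat. Qed.

Let m_gt0 i : 0 < m i. Proof. exact: m_pop.1. Qed.

Let S := \sum_(i < n) deg R i * m i.

Let S_gt0 : 0 < S.
Proof.
apply: (@lt_le_trans _ _ 1) => //; rewrite -m_pop.2; apply: ler_sum => i _.
by rewrite ler_peMl ?deg_ge1 ?ltW.
Qed.

Local Notation base_w := (wsum m (fun=> 1) (tau * LP + cP) (tau * LU)).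
Local Notation gamma_w := (wsum m (fun i => beta * deg R i / S) pP pU).
Local Notation lambda_w := (wsum m (fun i => beta * (deg R i * (deg R i - 1)) / S) pP pU).
Local Notation loss_w := (wsum m (@deg R n) LP LU).

Lemma gammaf_wsum y : gammaf m pP pU beta y = gamma_w y.
Proof.
rewrite /gammaf /wsum mulr_sumr; apply: eq_bigr => i _.
rewrite /wdeg /infp /gfrac -/S.
by field; rewrite !gt_eqF.
Qed.

Lemma lambdaf_wsum y : lambdaf m pP pU beta y = lambda_w y.
Proof.
rewrite /lambdaf /wsum mulr_sumr; apply: eq_bigr => i _.
rewrite /wdeg /infp /gfrac -/S.
by field; rewrite !gt_eqF.
Qed.

Lemma SC_wsum y : cost y = base_w y + tau * (gamma_w y * loss_w y * geom K (lambda_w y)).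
Proof.
rewrite /SC /CP /CN /ef gammaf_wsum lambdaf_wsum -/(geom K _).
have -> : tau * (gamma_w y * loss_w y * geom K (lambda_w y)) =
          tau * (gamma_w y * geom K (lambda_w y)) * loss_w y by ring.
move: (gamma_w y * _) => e.
by rewrite /wsum mulr_sumr -big_split; apply: eq_bigr => i _ /=; ring.
Qed.

Lemma gamma_w_ge0 y : inY m y -> 0 <= gamma_w y.
Proof.
by move=> hy; rewrite wsum_ge0 ?(ltW (le_lt_trans pP_ge0 pP_lt_pU)) // => i;
  rewrite divr_ge0 ?mulr_ge0 ?ltW.
Qed.

Lemma lambda_w_ge0 y : inY m y -> 0 <= lambda_w y.
Proof.
by move=> hy; rewrite wsum_ge0 ?(ltW (le_lt_trans pP_ge0 pP_lt_pU)) // => i;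
  rewrite divr_ge0 ?mulr_ge0 ?subr_ge0 ?deg_ge1 ?ltW.
Qed.

Lemma loss_w_ge0 y : inY m y -> 0 <= loss_w y.
Proof. by move=> hy; rewrite wsum_ge0 ?(ltW (le_lt_trans LP_ge0 LP_lt_LU)). Qed.

Lemma inY_midpoint y1 y2 : inY m y1 -> inY m y2 -> inY m (midpoint y1 y2).
Proof.
move=> h1 h2 i; have /andP[? ?] := h1 i; have /andP[? ?] := h2 i.
by apply/andP; split; rewrite /midpoint; lra.
Qed.

Lemma inY_transfer y i j e : inY m y -> i != j -> 0 <= e <= y i -> e <= m j - y j ->
  inY m (transfer y i j e).
Proof.
move=> hy ij /andP[e0 ei] ej k; rewrite /transfer.
have [-> | kj] := eqVneq k j.
  have /andP[? ?] := hy j; rewrite eq_sym (negbTE ij) subr0 mulr1.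
  by apply/andP; split; lra.
have [-> | ki] := eqVneq k i.
  have /andP[? ?] := hy i; rewrite sub0r mulrN1.
  by apply/andP; split; lra.
by rewrite subrr mulr0 addr0.
Qed.

Lemma SC_midpoint_lt y1 y2 k : inY m y1 -> inY m y2 ->
  (forall i, y1 i <= y2 i) -> y1 k < y2 k ->
  cost (midpoint y1 y2) < (cost y1 + cost y2) / 2.
Proof.
move=> h1 h2 le12 lt12; rewrite !SC_wsum !wsum_midpoint.
have gw_gt0 i : 0 < beta * deg R i / S by rewrite divr_gt0 ?mulr_gt0 ?deg_gt0.
have gamma21 : gamma_w y2 < gamma_w y1 by apply: (lt_wsum m _ _ le12 lt12).
have loss21 : loss_w y2 < loss_w y1 by apply: (lt_wsum m deg_gt0 _ le12 lt12).
have lambda21 : lambda_w y2 <= lambda_w y1.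
  apply: le_wsum; rewrite ?ltW // => i.
  by rewrite divr_ge0 ?mulr_ge0 ?subr_ge0 ?deg_ge1 ?ltW ?deg_gt0.
have g2 := gamma_w_ge0 h2; have l2 := loss_w_ge0 h2; have b2 := lambda_w_ge0 h2.
have prod_lt : (gamma_w y1 + gamma_w y2) / 2 * ((loss_w y1 + loss_w y2) / 2) <
    (gamma_w y1 * loss_w y1 + gamma_w y2 * loss_w y2) / 2 by nra.
have geom_mid := geom_midpoint_le K (le_trans b2 lambda21) b2.
have geom_bounds : 0 < geom K ((lambda_w y1 + lambda_w y2) / 2) <=
    (geom K (lambda_w y1) + geom K (lambda_w y2)) / 2.
  by rewrite geom_mid andbT; apply: lt_le_trans (geom_ge1 _ _) => //; lra.
have prod21 : 0 <= gamma_w y2 * loss_w y2 <= gamma_w y1 * loss_w y1.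
  by rewrite mulr_ge0 //= ler_pM ?(ltW gamma21) ?(ltW loss21).
have := midpoint_mul_lt prod21 prod_lt (ler_geom K b2 lambda21) geom_bounds.
rewrite -(ltr_pM2l tau_gt0); lra.
Qed.

Lemma SC_transfer_lt y i j e : inY m y -> inY m (transfer y i j e) ->
  (i < j)%N -> 0 < e -> cost (transfer y i j e) < cost y.
Proof.
move=> hy hy' ij e0; rewrite !SC_wsum; set y' := transfer y i j e.
have lt_ij := ltr_deg ij; have Si_gt0 : 0 < S^-1 by rewrite invr_gt0.
have base_eq : base_w y' = base_w y.
  by apply/eqP; rewrite -subr_eq0 wsum_transfer subrr mulr0 mul0r.
have gamma_lt : gamma_w y' < gamma_w y.
  rewrite -subr_lt0 wsum_transfer pmulr_rlt0 ?subr_lt0 // mulr_gt0 // subr_gt0.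
  by rewrite ltr_pM2r // ltr_pM2l.
have loss_lt : loss_w y' < loss_w y.
  by rewrite -subr_lt0 wsum_transfer pmulr_rlt0 ?subr_lt0 // mulr_gt0 // subr_gt0.
have lambda_le : lambda_w y' <= lambda_w y.
  rewrite -subr_le0 wsum_transfer mulr_ge0_le0 ?subr_le0 ?(ltW pP_lt_pU) //.
  rewrite mulr_ge0 ?(ltW e0) // subr_ge0 ler_pM2r // ler_pM2l //.
  by rewrite ler_pM ?subr_ge0 ?deg_ge1 ?lerD2r ?(ltW lt_ij).
have geom_le := ler_geom K (lambda_w_ge0 hy') lambda_le.
have prod_lt : gamma_w y' * loss_w y' < gamma_w y * loss_w y.
  by rewrite ltr_pM ?gamma_w_ge0 ?loss_w_ge0.
have prod_ge0 : 0 <= gamma_w y' * loss_w y' by rewrite mulr_ge0 ?gamma_w_ge0 ?loss_w_ge0.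
rewrite base_eq ltrD2l ltr_pM2l //.
apply: (le_lt_trans (ler_wpM2l prod_ge0 geom_le)).
by rewrite ltr_pM2r // (lt_le_trans ltr01 (geom_ge1 K_gt0 (lambda_w_ge0 hy))).
Qed.

Definition is_SC_min (y : 'I_n -> R) : Prop :=
  inY m y /\ forall y', inY m y' -> cost y <= cost y'.

Lemma SC_min_threshold y : is_SC_min y -> threshold m y.
Proof.
move=> [hy ymin] i j ij yi0; apply/eqP; rewrite eq_le; have /andP[_ ->] := hy j.
rewrite leNgt; apply/negP => yjm.
pose e := Num.min (y i) (m j - y j).
have e0 : 0 < e by rewrite lt_min yi0 subr_gt0.
have hy' : inY m (transfer y i j e).
  apply: inY_transfer => //; first by rewrite neq_ltn ij.
    by rewrite (ltW e0) ge_min lexx.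
  by rewrite ge_min lexx orbT.
by have := ymin _ hy'; rewrite leNgt SC_transfer_lt.
Qed.

Lemma SC_min_le_eq y1 y2 : is_SC_min y1 -> is_SC_min y2 ->
  (forall k, y1 k <= y2 k) -> y1 = y2.
Proof.
move=> [h1 min1] [h2 min2] le12; apply/funext => k; apply/eqP; rewrite eq_le le12 /=.
rewrite leNgt; apply/negP => lt12.
have := SC_midpoint_lt h1 h2 le12 lt12.
have := min1 _ (inY_midpoint h1 h2); have := min1 _ h2; have := min2 _ h1; lra.
Qed.

Lemma SC_min_unique y1 y2 : is_SC_min y1 -> is_SC_min y2 -> y1 = y2.
Proof.
move=> min1 min2.
have [le12 | le21] := threshold_comparable min1.1 min2.1
  (SC_min_threshold min1) (SC_min_threshold min2).
  exact: SC_min_le_eq.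
by apply/esym; apply: SC_min_le_eq.
Qed.

Local Open Scope classical_set_scope.

Lemma continuous_SC_row : continuous (fun v : 'rV[R]_n => cost (fun i => v ord0 i)).
Proof.
have -> : (fun v : 'rV[R]_n => cost (fun i => v ord0 i)) = fun v =>
    base_w (fun i => v ord0 i) + tau * (gamma_w (fun i => v ord0 i) *
    loss_w (fun i => v ord0 i) * geom K (lambda_w (fun i => v ord0 i))).
  by apply/funext => v; rewrite SC_wsum.
move=> v; have wsum_cvg c p q := @continuous_wsum R n m c p q v.
have geom_cvg : (fun w : 'rV[R]_n => geom K (lambda_w (fun i => w ord0 i))) @ v -->
    geom K (lambda_w (fun i => v ord0 i)).
  exact: continuous_comp (wsum_cvg _ _ _) (@continuous_geom R K _).
exact: cvgD (wsum_cvg _ _ _)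
  (cvgM (cvg_cst _) (cvgM (cvgM (wsum_cvg _ _ _) (wsum_cvg _ _ _)) geom_cvg)).
Qed.

Lemma SC_min_exists : exists y, is_SC_min y.
Proof.
have [y [hy ymin]] := box_min_exists (fun i => ltW (m_gt0 i)) continuous_SC_row.
have row_coord (x : 'I_n -> R) : (fun i => (\row_j x j) ord0 i) = x.
  by apply/funext => i; rewrite mxE.
by exists y; split => // y' hy'; have := ymin y' hy'; rewrite !row_coord.
Qed.

End SocialCostMinimizer.

Unset Implicit Arguments.

Theorem theorem5 (R : realType) (Dmax : nat) (m : 'I_Dmax -> R)
  (tauDA LP LU pP pU betaIA cP cI xicov ded : R) (K : nat) :
  is_pop_size m ->
  0 < tauDA <= 1 ->
  0 <= LP -> LP < LU ->
  0 <= pP -> pP < pU -> pU <= 1 ->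
  0 < betaIA <= 1 ->
  (0 < K)%N ->
  0 <= cP -> 0 <= cI ->
  0 < xicov <= 1 -> 0 <= ded ->
  (* Assumption (A) *)
  LP < (1 - xicov) * LU -> cI + ded < cP ->
  exists! y : 'I_Dmax -> R,
    inY m y /\
    forall y' : 'I_Dmax -> R, inY m y' ->
      SC m tauDA LP LU pP pU betaIA cP K y <= SC m tauDA LP LU pP pU betaIA cP K y'.
Proof.
move=> pop /andP[tau0 _] LP0 LPU pP0 pPU _ /andP[beta0 _] K0 _ _ _ _ _ _.
have [y ymin] : exists y, is_SC_min m tauDA LP LU pP pU betaIA cP K y.
  exact: SC_min_exists.
exists y; split=> // y' y'min.
exact: SC_min_unique ymin y'min.
Qed.
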